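(* Let $C$ be a finite set of conditional constructor set constraints and let $\mathrm{Sat}(C)$ be its saturation. Then for every assignment $\theta$: $\theta \models C$ if and only if $\theta \models \mathrm{Sat}(C)$.
   Context: Fix a finite set $\underline{D}$ of datatype identifiers. Each $d \in \underline{D}$ has a finite set $\mathrm{Con}(d)$ of constructors. There is a countable supply of refinement variables $X, Y, Z, \dots$. An assignment $\theta$ maps each refinement variable $X$ to a function that sends each $d \in \underline{D}$ to a subset $\theta(X)(d) \subseteq \mathrm{Con}(d)$. A constructor set expression over $d$ is either a finite set $\{k_1,\dots,k_m\} \subseteq \mathrm{Con}(d)$ or a pair $X(d)$. Its meaning is $\theta[\![X(d)]\!] = \theta(X)(d)$ and $\theta[\![\{k_1,\dots,k_m\}]\!] = \{k_1,\dots,k_m\}$. An inclusion constraint $S_1 \subseteq S_2$ relates two expressions over the same $d$, and $k \in S$ abbreviates $\{k\} \subseteq S$. A (conditional) constraint $\phi \mathbin{?} S_1 \subseteq S_2$ consists of a finite set $\phi$ (the guard) of inclusions of the form $k \in X(d)$ together with an inclusion $S_1 \subseteq S_2$ (the body). $\theta$ satisfies $\phi \mathbin{?} S_1 \subseteq S_2$ if the following holds: whenever $k \in \theta(X)(d)$ for every $k \in X(d)$ in $\phi$, then $\theta[\![S_1]\!] \subseteq \theta[\![S_2]\!]$. $\theta \models C$ means $\theta$ satisfies every constraint of $C$. A constraint is atomic if its body has one of the forms $X(d) \subseteq Y(d)$, $X(d) \subseteq \{k_1,\dots,k_m\}$, $k \in X(d)$, or $k \in \emptyset$. Every constraint is converted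 to an equivalent finite set of atomic constraints with the same guard, as follows. A body $\{k_1,\dots,k_m\} \subseteq S$ is split into the bodies $k_i \in S$. A body $k \in \{k_1,\dots,k_m\}$ is dropped if $k$ is one of the $k_i$, and otherwise becomes $k \in \emptyset$. The saturation rules, with conclusions converted to atomic form, are: - (Transitivity) from $\phi \mathbin{?} S_1 \subseteq S_2$ and $\psi \mathbin{?} S_2 \subseteq S_3$, derive $\phi \cup \psi \mathbin{?} S_1 \subseteq S_3$; - (Satisfaction) from $\phi \mathbin{?} k \in X(d)$ and $\psi \cup \{k \in X(d)\} \mathbin{?} S_1 \subseteq S_2$, derive $\phi \cup \psi \mathbin{?} S_1 \subseteq S_2$; - (Weakening) from $\phi \mathbin{?} X(d) \subseteq Y(d)$ and $\psi \cup \{k \in Y(d)\} \mathbin{?} S_1 \subseteq S_2$, derive $\phi \cup \psi \cup \{k \in X(d)\} \mathbin{?} S_1 \subseteq S_2$. An atomic constraint set is saturated if it is closed under these rules. $\mathrm{Sat}(C)$ is the saturated atomic constraint set obtained from (the atomic form of) $C$ by iteratively applying the rules. *)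

From HB Require Import structures.
From mathcomp Require Import all_boot.
From mathcomp Require Import finmap.
From Stdlib Require List.

Set Implicit Arguments.
Unset Strict Implicit.
Unset Printing Implicit Defensive.

Local Open Scope fset_scope.

(* Refinement variables: a countable supply, represented by [nat].
   Datatype identifiers: a finite type [D]; constructors of [d]: the finite
   type [Con d]. *)

Section ConstructorSetConstraints.

Variables (D : finType) (Con : D -> finType).

Inductive sexpr (d : D) : Type :=
  | SVar of nat
  | SSet of {set Con d}.

Record body : Type := Body { bd : D; blhs : sexpr bd; brhs : sexpr bd }.

(* A guard atom k ∈ X(d), encoded as (d, (X, k)). *)
Definition gatom : Type := {d : D & (nat * Con d)%type}.

Definition GA (d : D) (X : nat) (k : Con d) : gatom :=
  @Tagged D d (fun d => (nat * Con d)%type) (X, k).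

(* A conditional constraint φ ? S1 ⊆ S2, the guard φ a finite set of atoms. *)
Definition constraint : Type := ({fset gatom} * body)%type.

Definition assignment : Type := nat -> forall d : D, {set Con d}.

Definition eval (θ : assignment) (d : D) (e : sexpr d) : {set Con d} :=
  match e with
  | SVar X => θ X d
  | SSet s => s
  end.

Definition atom_holds (θ : assignment) (a : gatom) : Prop :=
  (tagged a).2 \in θ (tagged a).1 (tag a).

Definition body_holds (θ : assignment) (b : body) : Prop :=
  eval θ (blhs b) \subset eval θ (brhs b).

Definition satisfies (θ : assignment) (c : constraint) : Prop :=
  (forall a, a \in c.1 -> atom_holds θ a) -> body_holds θ c.2.

Definition models (θ : assignment) (C : constraint -> Prop) : Prop :=
  forall c, C c -> satisfies θ c.

(* Conversion of a constraint into its atomic form (same guard):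
   - X(d) ⊆ S is already atomic;
   - {k1..km} ⊆ Y(d) is split into the bodies ki ∈ Y(d);
   - {k1..km} ⊆ {l1..ln} is split into ki ∈ {l1..ln}, each of which is dropped
     if ki is one of the lj and otherwise becomes ki ∈ ∅. *)
Definition atomize (c : constraint) : seq constraint :=
  let: (φ, Body d s1 s2) := c in
  match s1 with
  | SVar _ => [:: c]
  | SSet s =>
      match s2 with
      | SVar Y => [seq (φ, @Body d (SSet [set k]) (SVar d Y)) | k <- enum s]
      | SSet t => [seq (φ, @Body d (SSet [set k]) (SSet set0))
                  | k <- enum s & k \notin t]
      end
  end.

(* Sat(C): the least set of constraints containing the atomic form of C and
   closed under Transitivity, Satisfaction and Weakening (conclusions
   converted to atomic form). *)
Inductive Sat (C : seq constraint) : constraint -> Prop :=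
  | Sat_base c c' :
      List.In c C -> List.In c' (atomize c) -> Sat C c'
  | Sat_trans (φ ψ : {fset gatom}) (d : D) (s1 s2 s3 : sexpr d) c' :
      Sat C (φ, Body s1 s2) -> Sat C (ψ, Body s2 s3) ->
      List.In c' (atomize (φ `|` ψ, Body s1 s3)) -> Sat C c'
  | Sat_satisfaction (φ ψ : {fset gatom}) (d : D) (X : nat) (k : Con d)
      (b : body) c' :
      Sat C (φ, Body (SSet [set k]) (SVar d X)) ->
      Sat C (ψ `|` [fset GA X k], b) ->
      List.In c' (atomize (φ `|` ψ, b)) -> Sat C c'
  | Sat_weakening (φ ψ : {fset gatom}) (d : D) (X Y : nat) (k : Con d)
      (b : body) c' :
      Sat C (φ, Body (SVar d X) (SVar d Y)) ->
      Sat C (ψ `|` [fset GA Y k], b) ->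
      List.In c' (atomize (φ `|` ψ `|` [fset GA X k], b)) -> Sat C c'.

End ConstructorSetConstraints.

(* Every constraint in Sat(C) is a semantic consequence of C, since atomic
   conversion preserves satisfaction and each saturation rule is sound;
   conversely the atomic form of C lies in Sat(C) and is equivalent to C. *)

From mathcomp Require Import all_boot.
From mathcomp Require Import finmap.
From Stdlib Require List.

Set Implicit Arguments.
Unset Strict Implicit.
Unset Printing Implicit Defensive.

Local Open Scope fset_scope.

Lemma InP (T : eqType) (x : T) (s : seq T) : reflect (List.In x s) (x \in s).
Proof.
elim: s => [|y s IHs]; first exact: ReflectF.
rewrite in_cons; apply: (iffP orP) => /=.
- by case=> [/eqP ->|/IHs]; [left|right].
- by case=> [->|/IHs]; [left; rewrite eqxx|right].
Qed.

Section Soundness.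

Variables (D : finType) (Con : D -> finType) (θ : assignment Con).

Definition guard_holds (φ : {fset gatom Con}) : Prop :=
  forall a, a \in φ -> atom_holds θ a.

Lemma guard_holdsU (φ ψ : {fset gatom Con}) :
  guard_holds (φ `|` ψ) <-> guard_holds φ /\ guard_holds ψ.
Proof.
split=> [Hφψ | [Hφ Hψ] a /fsetUP [/Hφ | /Hψ] //].
by split=> a Ha; apply: Hφψ; rewrite in_fsetU Ha ?orbT.
Qed.

Lemma guard_holdsU1 (φ : {fset gatom Con}) (a : gatom Con) :
  guard_holds (φ `|` [fset a]) <-> guard_holds φ /\ atom_holds θ a.
Proof.
rewrite guard_holdsU; split=> [[Hφ Ha] | [Hφ Ha]]; split=> //.
- exact/Ha/fset11.
- by move=> b /fset1P ->.
Qed.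

Lemma body_holds_mem (d : D) (k : Con d) (e : sexpr Con d) :
  body_holds θ (Body (SSet [set k]) e) <-> k \in eval θ e.
Proof. by rewrite /body_holds sub1set. Qed.

Lemma satisfies_atomize (c : constraint Con) :
  satisfies θ c <-> forall c', List.In c' (atomize c) -> satisfies θ c'.
Proof.
case: c => φ [d [X|s] e]; first by split=> [Hc c' [<-|] | /(_ _ (or_introl erefl))].
split=> [Hc c' | Hat Hφ].
- case: e Hc => [Y|t] Hc /List.in_map_iff [k [<- /InP Hk]] Hφ;
    apply/body_holds_mem; have /subsetP Hst := Hc Hφ.
  + by apply: Hst; rewrite -mem_enum.
  + by move: Hk; rewrite mem_filter mem_enum => /andP [/negP Hkt /Hst].
- case: e Hat Hφ => [Y|t] Hat Hφ; rewrite /body_holds /=; apply/subsetP => k Hks.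
  + have Hin : List.In (φ, Body (SSet [set k]) (SVar Con d Y))
                       (atomize (φ, Body (SSet s) (SVar Con d Y))).
      by apply/List.in_map_iff; exists k; split=> //; apply/InP; rewrite mem_enum.
    exact: (body_holds_mem k (SVar Con d Y)).1 (Hat _ Hin Hφ).
  + apply/negPn/negP => Hkt.
    have Hin : List.In (φ, Body (SSet [set k]) (SSet set0))
                       (atomize (φ, Body (SSet s) (SSet t))).
      by apply/List.in_map_iff; exists k; split=> //;
        apply/InP; rewrite mem_filter mem_enum Hks Hkt.
    by have /body_holds_mem := Hat _ Hin Hφ; rewrite inE.
Qed.

Lemma satisfies_trans (φ ψ : {fset gatom Con}) (d : D) (s1 s2 s3 : sexpr Con d) :
  satisfies θ (φ, Body s1 s2) -> satisfies θ (ψ, Body s2 s3) ->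
  satisfies θ (φ `|` ψ, Body s1 s3).
Proof.
move=> H12 H23 /guard_holdsU [Hφ Hψ].
exact: subset_trans (H12 Hφ) (H23 Hψ).
Qed.

Lemma satisfies_satisfaction (φ ψ : {fset gatom Con}) (d : D) (X : nat)
    (k : Con d) (b : body Con) :
  satisfies θ (φ, Body (SSet [set k]) (SVar Con d X)) ->
  satisfies θ (ψ `|` [fset GA X k], b) ->
  satisfies θ (φ `|` ψ, b).
Proof.
move=> Hk Hb /guard_holdsU [Hφ Hψ]; apply/Hb/guard_holdsU1; split=> //.
exact: (body_holds_mem k (SVar Con d X)).1 (Hk Hφ).
Qed.

Lemma satisfies_weakening (φ ψ : {fset gatom Con}) (d : D) (X Y : nat)
    (k : Con d) (b : body Con) :
  satisfies θ (φ, Body (SVar Con d X) (SVar Con d Y)) ->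
  satisfies θ (ψ `|` [fset GA Y k], b) ->
  satisfies θ (φ `|` ψ `|` [fset GA X k], b).
Proof.
move=> HXY Hb /guard_holdsU1 [/guard_holdsU [Hφ Hψ] HX].
apply/Hb/guard_holdsU1; split=> //.
exact: (subsetP (HXY Hφ)).
Qed.

Lemma models_Sat (C : seq (constraint Con)) :
  models θ (fun c => List.In c C) -> models θ (Sat C).
Proof.
move=> HC c; elim=> {c} [c c' Hc | φ ψ d s1 s2 s3 c' _ H12 _ H23
  | φ ψ d X k b c' _ Hk _ Hb | φ ψ d X Y k b c' _ HXY _ Hb];
  apply: (satisfies_atomize _).1.
- exact: HC.
- exact: satisfies_trans H12 H23.
- exact: satisfies_satisfaction Hk Hb.
- exact: satisfies_weakening HXY Hb.
Qed.

End Soundness.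

Theorem theorem8p3 (D : finType) (Con : D -> finType)
    (C : seq (constraint Con)) (θ : assignment Con) :
  models θ (fun c => List.In c C) <-> models θ (Sat C).
Proof.
split; first exact: models_Sat.
move=> HSat c Hc; apply/satisfies_atomize => c' Hc'.
exact/HSat/(Sat_base Hc Hc').
Qed.
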